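(* Let $0<r<\frac{C_0}{2}$ where $C_0=\frac14$. Then $1-|z|^2\simeq1-|w|^2$ whenever $z,w\in\mathbb{B}_n$ and $w\in D_\psi(z,r)$, with comparability constants independent of $z,w$.
   Context: $\mathbb{B}_n$ is the open unit ball of $\mathbb{C}^n$, $\langle z,w\rangle=\sum_jz_j\overline{w_j}$. For $z\ne0$, $P_z\zeta=\frac{\langle\zeta,z\rangle}{\langle z,z\rangle}z$, $P_0=0$, $Q_z=I-P_z$, and $D_\psi(z,r)=\{w\in\mathbb{B}_n:|z-P_zw|<r(1-|z|^2)^{3/2},\ |Q_zw|<r(1-|z|^2)\}$. $A\simeq B$ means $C^{-1}B\le A\le CB$ for a positive constant $C$. *)

From HB Require Import structures.
From mathcomp Require Import all_boot all_order all_algebra.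
From mathcomp Require Import complex.
Set Implicit Arguments. Unset Strict Implicit. Unset Printing Implicit Defensive.
Import Order.TTheory GRing.Theory Num.Theory.
Local Open Scope ring_scope.

(* C^n is modelled as row vectors 'rV[R[i]]_n over the complex numbers
   R[i] = complex R of a real closed field R (e.g. the real numbers). *)
Section Ball.
Variables (R : rcfType) (n : nat).
Local Notation C := R[i].
Local Notation vec := 'rV[C]_n.

Definition dotc (z w : vec) : C := \sum_(j < n) z 0 j * conjc (w 0 j).

(* Euclidean norm |z| = sqrt(Re <z,z>) (note <z,z> is real and >= 0) *)
Definition normv (z : vec) : R := Num.sqrt (complex.Re (dotc z z)).

Definition Pz (z zeta : vec) : vec :=
  if z == 0 then 0 else (dotc zeta z / dotc z z) *: z.

Definition Qz (z zeta : vec) : vec := zeta - Pz z zeta.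

Definition inBall (w : vec) : bool := normv w < 1.

Definition Dpsi (z : vec) (r : R) : pred vec := fun w =>
  [&& inBall w,
      normv (z - Pz z w) < r * Num.sqrt ((1 - normv z ^+ 2) ^+ 3)
    & normv (Qz z w) < r * (1 - normv z ^+ 2)].

End Ball.

From HB Require Import structures.
From mathcomp Require Import all_boot all_order all_algebra.
From mathcomp Require Import complex.
From mathcomp Require Import ring lra.
Set Implicit Arguments. Unset Strict Implicit. Unset Printing Implicit Defensive.
Import Order.TTheory GRing.Theory Num.Theory.
Local Open Scope ring_scope.

(* Since z - w = (z - P_z w) - Q_z w, the conditions defining D_psi(z,r)
   give |z - w| < 2 r (1-|z|^2) <= (1-|z|^2)/4. Hence ||z| - |w|| is small,
   and as |z| + |w| < 2, the numbers 1-|z|^2 and 1-|w|^2 differ by at most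
   half of 1-|z|^2, so K = 2 works. The triangle inequality for |.| on C^n
   is Minkowski's inequality on the 2n real coordinates. *)

Section CauchySchwarz.
Variables (R : realFieldType) (I : finType).
Implicit Types f g : I -> R.

Lemma lagrange_identity f g :
  \sum_i \sum_j (f i * g j - f j * g i) ^+ 2 =
  2 * ((\sum_i f i ^+ 2) * (\sum_i g i ^+ 2) - (\sum_i f i * g i) ^+ 2).
Proof.
set A := \sum_i f i ^+ 2; set B := \sum_i g i ^+ 2; set C := \sum_i f i * g i.
have -> : 2 * (A * B - C ^+ 2) = A * B + B * A - 2 * (C * C) by ring.
rewrite !big_distrlr /= mulr_sumr -big_split -sumrB /=.
apply: eq_bigr => i _; rewrite mulr_sumr -big_split -sumrB /=.
by apply: eq_bigr => j _; ring.
Qed.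

Lemma cauchy_schwarz f g :
  (\sum_i f i * g i) ^+ 2 <= (\sum_i f i ^+ 2) * (\sum_i g i ^+ 2).
Proof.
rewrite -subr_ge0 -(pmulr_rge0 _ (ltr0Sn _ 1)) -lagrange_identity.
by do 2!apply: sumr_ge0 => ? _; rewrite sqr_ge0.
Qed.

End CauchySchwarz.

Section EuclideanNorm.
Variables (R : rcfType) (I : finType).
Implicit Types f g : I -> R.

Definition l2norm f : R := Num.sqrt (\sum_i f i ^+ 2).

Lemma eq_l2norm f g : f =1 g -> l2norm f = l2norm g.
Proof. by move=> fg; congr Num.sqrt; apply: eq_bigr => i _; rewrite fg. Qed.

Lemma l2norm_ge0 f : 0 <= l2norm f.
Proof. exact: sqrtr_ge0. Qed.

Lemma l2normD f g : l2norm (fun i => f i + g i) <= l2norm f + l2norm g.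
Proof.
set A := \sum_i f i ^+ 2; set B := \sum_i g i ^+ 2; set C := \sum_i f i * g i.
have A0 : 0 <= A by apply: sumr_ge0 => i _; rewrite sqr_ge0.
have B0 : 0 <= B by apply: sumr_ge0 => i _; rewrite sqr_ge0.
have CS : C <= Num.sqrt A * Num.sqrt B.
  rewrite -sqrtrM // (le_trans (ler_norm C)) // -sqrtr_sqr.
  exact/ler_wsqrtr/cauchy_schwarz.
have expand : \sum_i (f i + g i) ^+ 2 = A + 2 * C + B.
  by rewrite mulr_sumr -!big_split /=; apply: eq_bigr => i _; ring.
rewrite /l2norm expand -[X in _ <= X]ger0_norm ?addr_ge0 ?sqrtr_ge0 //.
rewrite -sqrtr_sqr; apply: ler_wsqrtr.
by rewrite sqrrD !sqr_sqrtr // -/A -/B mulr2n; lra.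
Qed.

End EuclideanNorm.

Section ComplexEuclideanNorm.
Variables (R : rcfType) (n : nat).
Implicit Types x y : 'rV[R[i]]_n.

Definition reim x (k : 'I_n * bool) : R :=
  if k.2 then complex.Re (x 0 k.1) else complex.Im (x 0 k.1).

Lemma normv_l2norm x : normv x = l2norm (reim x).
Proof.
rewrite /normv /dotc /l2norm -(pair_bigA _ (fun j b => reim x (j, b) ^+ 2)).
rewrite raddf_sum; congr Num.sqrt; apply: eq_bigr => j _.
by rewrite big_bool /reim /=; case: (x 0 j) => a b /=; ring.
Qed.

Lemma reimD x y k : reim (x + y) k = reim x k + reim y k.
Proof. by rewrite /reim mxE; case: k.2; rewrite raddfD. Qed.

Lemma reimN x k : reim (- x) k = - reim x k.
Proof. by rewrite /reim mxE; case: k.2; rewrite raddfN. Qed.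

Lemma normv_ge0 x : 0 <= normv x.
Proof. by rewrite normv_l2norm l2norm_ge0. Qed.

Lemma normvN x : normv (- x) = normv x.
Proof.
rewrite !normv_l2norm; congr Num.sqrt; apply: eq_bigr => k _.
by rewrite reimN sqrrN.
Qed.

Lemma normvD x y : normv (x + y) <= normv x + normv y.
Proof. by rewrite !normv_l2norm (eq_l2norm (reimD x y)) l2normD. Qed.

Lemma normvB x y : normv (x - y) <= normv x + normv y.
Proof. by rewrite -(normvN y) normvD. Qed.

Lemma ler_dist_normv x y : `|normv x - normv y| <= normv (x - y).
Proof.
have := normvD (x - y) y; have := normvD (y - x) x.
rewrite !subrK -opprB normvN ler_norml; lra.
Qed.

End ComplexEuclideanNorm.

Lemma sqrtr_cube_le (R : rcfType) (d : R) : 0 <= d <= 1 -> Num.sqrt (d ^+ 3) <= d.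
Proof.
case/andP=> d0 d1; rewrite -[X in _ <= X]ger0_norm // -sqrtr_sqr.
by apply: ler_wsqrtr; rewrite exprS -[X in _ <= X]mul1r ler_wpM2r ?exprn_ge0.
Qed.

Lemma Dpsi_normv_sub (R : rcfType) (n : nat) (z w : 'rV[R[i]]_n) (r : R) :
  0 <= r -> normv z <= 1 -> w \in Dpsi z r ->
  normv (z - w) < 2 * r * (1 - normv z ^+ 2).
Proof.
move=> r0 z1; rewrite unfold_in => /and3P[_ nearP nearQ].
have -> : z - w = (z - Pz z w) - Qz z w by rewrite /Qz opprB addrA subrK.
apply: le_lt_trans (normvB _ _) _.
have z0 := normv_ge0 z.
have d01 : 0 <= 1 - normv z ^+ 2 <= 1 by apply/andP; split; nra.
have := ler_wpM2l r0 (sqrtr_cube_le d01); lra.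
Qed.

Lemma ler_dist_one_subX2 (R : realDomainType) (a b : R) :
  0 <= a <= 1 -> 0 <= b <= 1 ->
  `|(1 - a ^+ 2) - (1 - b ^+ 2)| <= 2 * `|a - b|.
Proof.
case/andP=> a0 a1 /andP[b0 b1].
have -> : (1 - a ^+ 2) - (1 - b ^+ 2) = (a + b) * (b - a) by ring.
rewrite normrM distrC ger0_norm ?addr_ge0 //.
by rewrite ler_wpM2r ?normr_ge0 //; lra.
Qed.

Lemma comparable_of_dist (R : realFieldType) (x y : R) :
  `|x - y| <= x / 2 -> 2^-1 * y <= x /\ x <= 2 * y.
Proof. by rewrite ler_norml => /andP[]; split; lra. Qed.

Theorem lemma2p4 (R : rcfType) (n : nat) (r : R) :
  0 < r -> r < (1 / 4) / 2 ->
  exists K : R, 0 < K /\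
    forall z w : 'rV[R[i]]_n,
      inBall z -> inBall w -> w \in Dpsi z r ->
      K^-1 * (1 - normv w ^+ 2) <= 1 - normv z ^+ 2 /\
      1 - normv z ^+ 2 <= K * (1 - normv w ^+ 2).
Proof.
move=> r0 r8; exists 2; split=> // z w; rewrite /inBall => z1 w1 wD.
have za : 0 <= normv z <= 1 by rewrite normv_ge0 ltW.
have wb : 0 <= normv w <= 1 by rewrite normv_ge0 ltW.
set d := 1 - normv z ^+ 2.
have d0 : 0 < d by case/andP: za => a0 _; rewrite /d; nra.
have zw_near : normv (z - w) <= d / 4.
  have := Dpsi_normv_sub (ltW r0) (ltW z1) wD; rewrite -/d.
  have : 0 <= (1 / 4 / 2 - r) * d by apply: mulr_ge0; lra.
  nra.
apply: comparable_of_dist.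
apply: le_trans (ler_dist_one_subX2 za wb) _.
have := ler_dist_normv z w; lra.
Qed.
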